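(* Let $R$ be a monad on Sets, $LM$ a left $R$-module with values in Sets, and let $(C,\widetilde C)$ be subsets of $Ob(CC(R,LM))$ and $\widetilde{Ob}(CC(R,LM))$ satisfying conditions (1.1)–(1.6) below (equivalently, corresponding to a C-subsystem of $CC(R,LM)$). Then the assignment $(Ceq,\widetilde{Ceq})\mapsto(\sim,\simeq)$ described below is a bijection from the set of pairs of subsets $(Ceq,\widetilde{Ceq})$ which together with $(C,\widetilde C)$ satisfy conditions (1.1)–(7b) below, onto the set of pairs $(\sim,\simeq)$ of equivalence relations on $C$ and $\widetilde C$ such that: (i) $(\sim,\simeq)$ satisfies the regular congruence conditions (a)–(f) below; (ii) if $\Gamma\in C$, $F\in C$ and $ft(\Gamma)\sim F$, then $\Gamma\sim\sigma(\Gamma,F)$; (iii) if $\mathcal J\in\widetilde C$, $F\in C$ and $\partial(\mathcal J)\sim F$, then $\mathcal J\simeq\widetilde\sigma(\mathcal J,F)$. The inverse sends $(\sim,\simeq)$ to $Ceq=\{(\Gamma,T,T'):(\Gamma,T),(\Gamma,T')\in C,\ (\Gamma,T)\sim(\Gamma,T')\}$ and $\widetilde{Ceq}=\{(\Gamma,T,o,o'):(\Gamma,T,o),(\Gamma,T,o')\in\widetilde C,\ (\Gamma,T,o)\simeq(\Gamma,T,o')\}$. Conditions (for all well-formed data, $n=l(\Gamma)$, $i=l(\Gamma_1)$): (1.1) $(\rhd)$; (1.2) $(\Gamma,T\rhd)\Rightarrow(\Gamma\rhd)$; (1.3) $(\Gamma\vdash r:R)\Rightarrow(\Gamma,R\rhd)$;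 (1.4) $(\Gamma,T\rhd)\wedge(\Gamma,\Delta\vdash r:R)\Rightarrow(\Gamma,T,t_{n+1}\Delta\vdash t_{n+1}r:t_{n+1}R)$; (1.5) $(\Gamma\vdash s:S)\wedge(\Gamma,S,\Delta\vdash r:R)\Rightarrow(\Gamma,s_{n+1}(\Delta[s/n+1])\vdash s_{n+1}(r[s/n+1]):s_{n+1}(R[s/n+1]))$; (1.6) $(\Gamma,T\rhd)\Rightarrow(\Gamma,T\vdash n+1:t_{n+1}T)$; (2a) $(\Gamma\vdash T=T')\Rightarrow(\Gamma,T\rhd)$; (2b) $(\Gamma,T\rhd)\Rightarrow(\Gamma\vdash T=T)$; (2c) $(\Gamma\vdash T=T')\Rightarrow(\Gamma\vdash T'=T)$; (2d) $(\Gamma\vdash T=T')\wedge(\Gamma\vdash T'=T'')\Rightarrow(\Gamma\vdash T=T'')$; (3a) $(\Gamma\vdash o=o':T)\Rightarrow(\Gamma\vdash o:T)$; (3b) $(\Gamma\vdash o:T)\Rightarrow(\Gamma\vdash o=o:T)$; (3c) $(\Gamma\vdash o=o':T)\Rightarrow(\Gamma\vdash o'=o:T)$; (3d) $(\Gamma\vdash o=o':T)\wedge(\Gamma\vdash o'=o'':T)\Rightarrow(\Gamma\vdash o=o'':T)$; (4a) $(\Gamma_1\vdash T=T')\wedge(\Gamma_1,T,\Gamma_2\vdash S=S')\Rightarrow(\Gamma_1,T',\Gamma_2\vdash S=S')$; (4b) $(\Gamma_1\vdash T=T')\wedge(\Gamma_1,T,\Gamma_2\vdash o=o':S)\Rightarrow(\Gamma_1,T',\Gamma_2\vdash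 o=o':S)$; (4c) $(\Gamma\vdash S=S')\wedge(\Gamma\vdash o=o':S)\Rightarrow(\Gamma\vdash o=o':S')$; (5a) $(\Gamma_1,T\rhd)\wedge(\Gamma_1,\Gamma_2\vdash S=S')\Rightarrow(\Gamma_1,T,t_{i+1}\Gamma_2\vdash t_{i+1}S=t_{i+1}S')$; (5b) $(\Gamma_1,T\rhd)\wedge(\Gamma_1,\Gamma_2\vdash o=o':S)\Rightarrow(\Gamma_1,T,t_{i+1}\Gamma_2\vdash t_{i+1}o=t_{i+1}o':t_{i+1}S)$; (6a) $(\Gamma_1,T,\Gamma_2\vdash S=S')\wedge(\Gamma_1\vdash r:T)\Rightarrow(\Gamma_1,s_{i+1}(\Gamma_2[r/i+1])\vdash s_{i+1}(S[r/i+1])=s_{i+1}(S'[r/i+1]))$; (6b) $(\Gamma_1,T,\Gamma_2\vdash o=o':S)\wedge(\Gamma_1\vdash r:T)\Rightarrow(\Gamma_1,s_{i+1}(\Gamma_2[r/i+1])\vdash s_{i+1}(o[r/i+1])=s_{i+1}(o'[r/i+1]):s_{i+1}(S[r/i+1]))$; (7a) $(\Gamma_1,T,\Gamma_2,S\rhd)\wedge(\Gamma_1\vdash r=r':T)\Rightarrow(\Gamma_1,s_{i+1}(\Gamma_2[r/i+1])\vdash s_{i+1}(S[r/i+1])=s_{i+1}(S[r'/i+1]))$; (7b) $(\Gamma_1,T,\Gamma_2\vdash o:S)\wedge(\Gamma_1\vdash r=r':T)\Rightarrow(\Gamma_1,s_{i+1}(\Gamma_2[r/i+1])\vdash s_{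i+1}(o[r/i+1])=s_{i+1}(o[r'/i+1]):s_{i+1}(S[r/i+1]))$.
   Context: $[n]=\{1,\dots,n\}$. $R$ is a monad on Sets (unit $\eta$, Kleisli extension $\mathrm{bind}$), $LM$ a left $R$-module with action $\rho(f):LM(X)\to LM(Y)$ for $f:X\to R(Y)$. Elements of $Y$ are regarded in $R(Y)$ via $\eta_Y$; $E(f_1/1,\dots,f_m/m)$ is $\rho(f)(E)$ or $\mathrm{bind}(f)(E)$ with $f(i)=f_i$. For $E$ in $LM([m])$ or $R([m])$, $m\ge n$: $t_{n+1}E:=E(1/1,\dots,n/n,n+2/n+1,\dots,m+1/m)$; for $m\ge n+1$, $s\in R([n])$: $s_{n+1}(E[s/n+1]):=E(1/1,\dots,n/n,s/n+1,n+1/n+2,\dots,m-1/m)$; both applied componentwise to sequences. $Ob(CC(R,LM))$: sequences $\Gamma=(T_1,\dots,T_n)$, $T_j\in LM([j-1])$, $l(\Gamma)=n$, $ft$ drops the last entry; commas concatenate. $\widetilde{Ob}(CC(R,LM))$: elements $(\Gamma\vdash t:T)=(T_1,\dots,T_n,T,t)$ with $T\in LM([n])$, $t\in R([n])$; $\partial(\Gamma\vdash t:T)=(\Gamma,T)$. $Ceq\subset\coprod_n(\prod_{j<n}LM([j]))\times LM([n])^2$, $\widetilde{Ceq}\subset\coprod_n(\prod_{j\le n}LM([j]))\times R([n])^2$. Notation: $(\Gamma\rhd)$: $\Gamma\in C$; $(\Gamma\vdash t:T)$ as a judgement: $(\Gamma,T,t)\in\widetilde C$; $(\Gamma\vdash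 S=S')$: $(\Gamma,S,S')\in Ceq$; $(\Gamma\vdash o=o':S)$: $(\Gamma,S,o,o')\in\widetilde{Ceq}$. The assignment $(Ceq,\widetilde{Ceq})\mapsto(\sim,\simeq)$: $(T_1,\dots,T_n)\sim(T'_1,\dots,T'_n)$ (elements of $C$) iff $n=0$ or ($ft$'s are $\sim$-related and $(T_1,\dots,T_{n-1}\vdash T_n=T'_n)$); different lengths never related; $(\Gamma\vdash o:S)\simeq(\Gamma'\vdash o':S')$ iff $(\Gamma,S)\sim(\Gamma',S')$ and $(\Gamma\vdash o=o':S)$. $\sigma((T_1,\dots,T_{n+k}),(T'_1,\dots,T'_n))=(T'_1,\dots,T'_n,T_{n+1},\dots,T_{n+k})$ for $k>0$. For $\mathcal J=(T_1,\dots,T_{n+k-1}\vdash t:T_{n+k})$, $\Gamma'=(T'_1,\dots,T'_n)$, $n\ge1,k\ge0$: $\widetilde\sigma(\mathcal J,\Gamma')=(T'_1,\dots,T'_n,T_{n+1},\dots,T_{n+k-1}\vdash t:T_{n+k})$ if $k>0$, $(T'_1,\dots,T'_{n-1}\vdash t:T'_n)$ if $k=0$. Operations (with $n=l(\Gamma)$): $T((\Gamma,T),(\Gamma,\Delta))=(\Gamma,T,t_{n+1}\Delta)$; $\widetilde T((\Gamma,T),(\Gamma,\Delta\vdash r:R))=(\Gamma,T,t_{n+1}\Delta\vdash t_{n+1}r:t_{n+1}R)$; $S((\Gamma\vdash s:S),(\Gamma,S,\Delta))=(\Gamma,s_{n+1}(\Delta[s/n+1]))$; $\widetilde S((\Gamma\vdash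 s:S),(\Gamma,S,\Delta\vdash r:R))=(\Gamma,s_{n+1}(\Delta[s/n+1])\vdash s_{n+1}(r[s/n+1]):s_{n+1}(R[s/n+1]))$; $\delta(\Gamma,T)=(\Gamma,T\vdash n+1:t_{n+1}T)$. Regular congruence conditions on $(\sim,\simeq)$: (a) both are equivalence relations; (b) $\Gamma\sim\Gamma'\Rightarrow l(\Gamma)=l(\Gamma')$ and $ft(\Gamma)\sim ft(\Gamma')$; (c) $\mathcal J\simeq\mathcal J'\Rightarrow\partial\mathcal J\sim\partial\mathcal J'$; (d) if $(\Gamma,T)\in C$, $\Gamma'\in C$, $\Gamma\sim\Gamma'$, there is $(\Gamma',T')\in C$ with $(\Gamma,T)\sim(\Gamma',T')$; (e) if $\mathcal J\in\widetilde C$, $F\in C$, $\partial\mathcal J\sim F$, there is $\mathcal J'\in\widetilde C$ with $\partial\mathcal J'=F$ and $\mathcal J\simeq\mathcal J'$; (f) compatibility with $T,\widetilde T,S,\widetilde S,\delta$: related arguments in $C/\widetilde C$ for which both applications are defined give related results. *)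

(* [n] = {1,...,n} is represented by 'I_n
   (0-based: the ordinal i stands for the element i+1 of [n]). *)
From mathcomp Require Import all_boot.

Set Implicit Arguments.
Unset Strict Implicit.
Unset Printing Implicit Defensive.

Record Monad := {
  mR : Type -> Type;
  meta : forall X, X -> mR X;
  mbind : forall X Y, (X -> mR Y) -> mR X -> mR Y;
  mbind_eta : forall X (r : mR X), mbind (@meta X) r = r;
  meta_bind : forall X Y (f : X -> mR Y) (x : X), mbind f (meta x) = f x;
  mbind_bind : forall X Y Z (f : X -> mR Y) (g : Y -> mR Z) (r : mR X),
      mbind g (mbind f r) = mbind (fun x => mbind g (f x)) r
}.
Arguments meta {m X}.
Arguments mbind {m X Y}.

Record LModule (M : Monad) := {
  LM : Type -> Type;
  lrho : forall X Y, (X -> mR M Y) -> LM X -> LM Y;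
  lrho_eta : forall X (E : LM X), lrho (@meta M X) E = E;
  lrho_comp : forall X Y Z (f : X -> mR M Y) (g : Y -> mR M Z) (E : LM X),
      lrho g (lrho f E) = lrho (fun x => mbind g (f x)) E
}.
Arguments LM {M}.
Arguments lrho {M l X Y}.

Section CC.
Variables (M : Monad) (L : LModule M).

(*  ctx = finite sequences of ety; it is an element of Ob(CC(R,LM))     *)
(*        iff its k-th entry (0-based) lies in LM([k])  (wf_ctx).       *)
(*  jdg = (Gamma, T, t), an element of Ob~ iff wf_jdg.                  *)

Definition ety := {j : nat & LM L 'I_j}.
Definition tm := {j : nat & mR M 'I_j}.
Definition ctx := seq ety.
Definition jdg := (ctx * ety * tm)%type.

Definition jctx (J : jdg) : ctx := J.1.1.
Definition jty (J : jdg) : ety := J.1.2.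
Definition jtm (J : jdg) : tm := J.2.

Fixpoint wf_from (k : nat) (G : ctx) : Prop :=
  match G with
  | [::] => True
  | e :: G' => tag e = k /\ wf_from k.+1 G'
  end.

Definition wf_ctx (G : ctx) : Prop := wf_from 0 G.

Definition wf_ext (G : ctx) (T : ety) : Prop := wf_ctx G /\ tag T = size G.

Definition wf_jdg (J : jdg) : Prop :=
  wf_ext (jctx J) (jty J) /\ tag (jtm J) = size (jctx J).

Definition ft (G : ctx) : ctx := take (size G).-1 G.
Definition bd (J : jdg) : ctx := rcons (jctx J) (jty J).

Section Ops.
Variable F : Type -> Type.
Variable act : forall X Y, (X -> mR M Y) -> F X -> F Y.

(* t_{n+1} E := E(1/1,...,n/n, n+2/n+1, ..., m+1/m)   for E in F([m]), m >= n.
   0-based: i |-> bump n i = lift n i. *)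
Definition wk_gen (n : nat) (e : {j : nat & F 'I_j}) : {j : nat & F 'I_j} :=
  let: existT m E := e in
  existT _ m.+1 (act (fun i : 'I_m => meta (lift (inord n : 'I_m.+1) i)) E).

(* the substitution map 'I_(k+1) -> R('I_k) for s in R([n]), n <= k :
   i |-> i (i < n),  n |-> s (regarded in R([k]) via [n] c [k]),
   i |-> i-1 (i > n). *)
Definition sub_fun (n k : nat) (h : n <= k) (s : mR M 'I_n)
  : 'I_k.+1 -> mR M 'I_k :=
  fun i => match unlift (inord n : 'I_k.+1) i with
           | Some j => meta j
           | None => mbind (fun j : 'I_n => meta (widen_ord h j)) s
           end.

(* s_{n+1}(E[s/n+1]) := E(1/1,...,n/n, s/n+1, n+1/n+2, ..., m-1/m)
   for E in F([m]), s in R([n]), m >= n+1 (n is the tag of s).  Outside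
   this range (never used on well-formed data) the entry is returned
   unchanged. *)
Definition sub_gen (s : tm) (e : {j : nat & F 'I_j}) : {j : nat & F 'I_j} :=
  let: existT n s0 := s in
  let: existT m E := e in
  match m return F 'I_m -> {j : nat & F 'I_j} with
  | 0 => fun E => existT _ 0 E
  | k.+1 => fun E =>
      match n <= k as b return (n <= k) = b -> {j : nat & F 'I_j} with
      | true => fun h => existT _ k (act (sub_fun h s0) E)
      | false => fun _ => existT _ k.+1 E
      end (erefl _)
  end E.

End Ops.

Definition wkT (n : nat) (e : ety) : ety := @wk_gen (LM L) (@lrho M L) n e.
Definition wkt (n : nat) (t : tm) : tm := @wk_gen (mR M) (@mbind M) n t.
Definition subT (s : tm) (e : ety) : ety := @sub_gen (LM L) (@lrho M L) s e.
Definition subt (s : tm) (t : tm) : tm := @sub_gen (mR M) (@mbind M) s t.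

(* the variable n+1 in R([n+1]) *)
Definition var (n : nat) : tm := existT _ n.+1 (meta (ord_max : 'I_n.+1)).

Definition sigma (G F : ctx) : ctx := F ++ drop (size F) G.
Definition sigmat (J : jdg) (F : ctx) : jdg :=
  if size F <= size (jctx J)
  then (F ++ drop (size F) (jctx J), jty J, jtm J)
  else (ft F, last (jty J) F, jtm J).

Definition Csubsystem (C : ctx -> Prop) (Ct : jdg -> Prop) : Prop :=
  (forall G, C G -> wf_ctx G) /\
  (forall J, Ct J -> wf_jdg J) /\
  (* 1.1 *) C [::] /\
  (* 1.2 *) (forall G T, C (rcons G T) -> C G) /\
  (* 1.3 *) (forall G R r, Ct (G, R, r) -> C (rcons G R)) /\
  (* 1.4 *) (forall G T D R r, C (rcons G T) -> Ct (G ++ D, R, r) ->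
       Ct (rcons G T ++ map (wkT (size G)) D, wkT (size G) R, wkt (size G) r)) /\
  (* 1.5 *) (forall G S s D R r, Ct (G, S, s) -> Ct (rcons G S ++ D, R, r) ->
       Ct (G ++ map (subT s) D, subT s R, subt s r)) /\
  (* 1.6 *) (forall G T, C (rcons G T) ->
       Ct (rcons G T, wkT (size G) T, var (size G))).

(* Ceq G T T'     stands for  (G |- T = T')                            *)
(* Cteq G T o o'  stands for  (G |- o = o' : T)                         *)

Definition eq_conditions (C : ctx -> Prop) (Ct : jdg -> Prop)
  (Ceq : ctx -> ety -> ety -> Prop) (Cteq : ctx -> ety -> tm -> tm -> Prop)
  : Prop :=
  (* Ceq, Ceq~ are subsets of their ambient sets *)
  (forall G T T', Ceq G T T' -> wf_ext G T /\ tag T' = size G) /\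
  (forall G T o o', Cteq G T o o' ->
       wf_ext G T /\ tag o = size G /\ tag o' = size G) /\
  (* 2a *) (forall G T T', Ceq G T T' -> C (rcons G T)) /\
  (* 2b *) (forall G T, C (rcons G T) -> Ceq G T T) /\
  (* 2c *) (forall G T T', Ceq G T T' -> Ceq G T' T) /\
  (* 2d *) (forall G T T' T'', Ceq G T T' -> Ceq G T' T'' -> Ceq G T T'') /\
  (* 3a *) (forall G T o o', Cteq G T o o' -> Ct (G, T, o)) /\
  (* 3b *) (forall G T o, Ct (G, T, o) -> Cteq G T o o) /\
  (* 3c *) (forall G T o o', Cteq G T o o' -> Cteq G T o' o) /\
  (* 3d *) (forall G T o o' o'', Cteq G T o o' -> Cteq G T o' o'' ->
              Cteq G T o o'') /\
  (* 4a *) (forall G1 T T' G2 S S', Ceq G1 T T' ->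
       Ceq (rcons G1 T ++ G2) S S' -> Ceq (rcons G1 T' ++ G2) S S') /\
  (* 4b *) (forall G1 T T' G2 S o o', Ceq G1 T T' ->
       Cteq (rcons G1 T ++ G2) S o o' -> Cteq (rcons G1 T' ++ G2) S o o') /\
  (* 4c *) (forall G S S' o o', Ceq G S S' -> Cteq G S o o' -> Cteq G S' o o') /\
  (* 5a *) (forall G1 T G2 S S', C (rcons G1 T) -> Ceq (G1 ++ G2) S S' ->
       Ceq (rcons G1 T ++ map (wkT (size G1)) G2)
           (wkT (size G1) S) (wkT (size G1) S')) /\
  (* 5b *) (forall G1 T G2 S o o', C (rcons G1 T) -> Cteq (G1 ++ G2) S o o' ->
       Cteq (rcons G1 T ++ map (wkT (size G1)) G2)
            (wkT (size G1) S) (wkt (size G1) o) (wkt (size G1) o')) /\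
  (* 6a *) (forall G1 T G2 S S' r, Ceq (rcons G1 T ++ G2) S S' -> Ct (G1, T, r) ->
       Ceq (G1 ++ map (subT r) G2) (subT r S) (subT r S')) /\
  (* 6b *) (forall G1 T G2 S o o' r, Cteq (rcons G1 T ++ G2) S o o' ->
       Ct (G1, T, r) ->
       Cteq (G1 ++ map (subT r) G2) (subT r S) (subt r o) (subt r o')) /\
  (* 7a *) (forall G1 T G2 S r r', C (rcons (rcons G1 T ++ G2) S) ->
       Cteq G1 T r r' ->
       Ceq (G1 ++ map (subT r) G2) (subT r S) (subT r' S)) /\
  (* 7b *) (forall G1 T G2 S o r r', Ct (rcons G1 T ++ G2, S, o) ->
       Cteq G1 T r r' ->
       Cteq (G1 ++ map (subT r) G2) (subT r S) (subt r o) (subt r' o)).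

(* on reversed sequences: (T_1..T_n) ~ (T'_1..T'_n) iff n = 0 or
   (ft ~ ft and (T_1..T_{n-1} |- T_n = T'_n)); different lengths never. *)
Fixpoint sim_rev (Ceq : ctx -> ety -> ety -> Prop) (rG rG' : seq ety) : Prop :=
  match rG, rG' with
  | [::], [::] => True
  | T :: rG1, T' :: rG1' => sim_rev Ceq rG1 rG1' /\ Ceq (rev rG1) T T'
  | _, _ => False
  end.

Definition phi_sim (C : ctx -> Prop) (Ceq : ctx -> ety -> ety -> Prop)
  (G G' : ctx) : Prop :=
  C G /\ C G' /\ sim_rev Ceq (rev G) (rev G').

Definition phi_simeq (C : ctx -> Prop) (Ct : jdg -> Prop)
  (Ceq : ctx -> ety -> ety -> Prop) (Cteq : ctx -> ety -> tm -> tm -> Prop)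
  (J J' : jdg) : Prop :=
  Ct J /\ Ct J' /\ phi_sim C Ceq (bd J) (bd J') /\
  Cteq (jctx J) (jty J) (jtm J) (jtm J').

Definition psi_Ceq (C : ctx -> Prop) (sim : ctx -> ctx -> Prop)
  (G : ctx) (T T' : ety) : Prop :=
  C (rcons G T) /\ C (rcons G T') /\ sim (rcons G T) (rcons G T').

Definition psi_Cteq (Ct : jdg -> Prop) (simeq : jdg -> jdg -> Prop)
  (G : ctx) (T : ety) (o o' : tm) : Prop :=
  Ct (G, T, o) /\ Ct (G, T, o') /\ simeq (G, T, o) (G, T, o').

Definition equiv_on {A : Type} (P : A -> Prop) (r : A -> A -> Prop) : Prop :=
  (forall x y, r x y -> P x /\ P y) /\
  (forall x, P x -> r x x) /\
  (forall x y, r x y -> r y x) /\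
  (forall x y z, r x y -> r y z -> r x z).

Definition regular_congruence (C : ctx -> Prop) (Ct : jdg -> Prop)
  (sim : ctx -> ctx -> Prop) (simeq : jdg -> jdg -> Prop) : Prop :=
  (* a *) (equiv_on C sim /\ equiv_on Ct simeq) /\
  (* b *) (forall G G', sim G G' -> size G = size G' /\ sim (ft G) (ft G')) /\
  (* c *) (forall J J', simeq J J' -> sim (bd J) (bd J')) /\
  (* d *) (forall G T G', C (rcons G T) -> C G' -> sim G G' ->
             exists T', C (rcons G' T') /\ sim (rcons G T) (rcons G' T')) /\
  (* e *) (forall J F, Ct J -> C F -> sim (bd J) F ->
             exists J', Ct J' /\ bd J' = F /\ simeq J J') /\
  (* f: T *) (forall G T D G' T' D',
       sim (rcons G T) (rcons G' T') -> sim (G ++ D) (G' ++ D') ->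
       sim (rcons G T ++ map (wkT (size G)) D)
           (rcons G' T' ++ map (wkT (size G')) D')) /\
  (* f: T~ *) (forall G T D R r G' T' D' R' r',
       sim (rcons G T) (rcons G' T') -> simeq (G ++ D, R, r) (G' ++ D', R', r') ->
       simeq (rcons G T ++ map (wkT (size G)) D, wkT (size G) R, wkt (size G) r)
             (rcons G' T' ++ map (wkT (size G')) D', wkT (size G') R',
              wkt (size G') r')) /\
  (* f: S *) (forall G S s D G' S' s' D',
       simeq (G, S, s) (G', S', s') -> sim (rcons G S ++ D) (rcons G' S' ++ D') ->
       sim (G ++ map (subT s) D) (G' ++ map (subT s') D')) /\
  (* f: S~ *) (forall G S s D R r G' S' s' D' R' r',
       simeq (G, S, s) (G', S', s') ->
       simeq (rcons G S ++ D, R, r) (rcons G' S' ++ D', R', r') ->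
       simeq (G ++ map (subT s) D, subT s R, subt s r)
             (G' ++ map (subT s') D', subT s' R', subt s' r')) /\
  (* f: delta *) (forall G T G' T', sim (rcons G T) (rcons G' T') ->
       simeq (rcons G T, wkT (size G) T, var (size G))
             (rcons G' T', wkT (size G') T', var (size G'))).

Definition target_conditions (C : ctx -> Prop) (Ct : jdg -> Prop)
  (sim : ctx -> ctx -> Prop) (simeq : jdg -> jdg -> Prop) : Prop :=
  equiv_on C sim /\ equiv_on Ct simeq /\
  (* i *)   regular_congruence C Ct sim simeq /\
  (* ii *)  (forall G F, C G -> C F -> sim (ft G) F -> sim G (sigma G F)) /\
  (* iii *) (forall J F, Ct J -> C F -> sim (bd J) F -> simeq J (sigmat J F)).

End CC.

(* By (ii), if Γ ~ Γ' and (Γ, T) is in C then (Γ, T) ~ (Γ', T), so a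
   relation (Γ, T) ~ (Γ', T') factors as Γ ~ Γ' followed by a change of the
   last type over a fixed prefix; hence [~] is determined by Ceq, and likewise
   (iii) makes [≃] determined by the term equalities over a fixed (Γ, T).
   Conversely, for the relations built from (Ceq, Ceq~), the conversion rules
   (4a)-(4c) transport type and term equalities along equal contexts, which
   gives transitivity and lets weakening and substitution, (5)-(7), be checked
   one context entry at a time. *)

From mathcomp Require Import all_boot.

Set Implicit Arguments.
Unset Strict Implicit.
Unset Printing Implicit Defensive.

Section Sequences.
Variables (M : Monad) (L : LModule M).

Lemma ft_rcons (G : ctx L) T : ft (rcons G T) = G.
Proof. by rewrite /ft size_rcons -cats1 take_size_cat. Qed.

Lemma sigma_rcons (G F : ctx L) T :
  size F = size G -> sigma (rcons G T) F = rcons F T.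
Proof. by move=> e; rewrite /sigma -cats1 drop_size_cat // cats1. Qed.

Lemma sigmat_rcons (G G' : ctx L) T T' (o : tm M) :
  size G' = size G -> sigmat (G, T, o) (rcons G' T') = (G', T', o).
Proof. by move=> e; rewrite /sigmat /= size_rcons e ltnn ft_rcons last_rcons. Qed.

Lemma wf_from_rcons k (G : ctx L) T :
  wf_from k (rcons G T) -> wf_from k G /\ tag T = k + size G.
Proof.
elim: G k => [|x G IH] k /=; first by move=> [-> _]; rewrite addn0.
by move=> [hx /IH [hG ->]]; rewrite addSnnS.
Qed.

End Sequences.

Section ContextEquality.
Variables (M : Monad) (L : LModule M) (Q : ctx L -> ety L -> ety L -> Prop).

(* The relation [~] that the paper assigns to [Q]; each entry is compared
   over the prefix of the left-hand context. *)
Definition eq_ctx (G G' : ctx L) : Prop := sim_rev Q (rev G) (rev G').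

Lemma eq_ctx_rcons G G' T T' :
  eq_ctx (rcons G T) (rcons G' T') <-> eq_ctx G G' /\ Q G T T'.
Proof. by rewrite /eq_ctx !rev_rcons /= revK. Qed.

Lemma eq_ctx0l G' : eq_ctx [::] G' -> G' = [::].
Proof. by case/lastP: G' => // G T; rewrite /eq_ctx rev_rcons. Qed.

Lemma eq_ctx_rconsl G T G' : eq_ctx (rcons G T) G' ->
  exists G0' T', G' = rcons G0' T' /\ eq_ctx G G0' /\ Q G T T'.
Proof.
case/lastP: G' => [|G0' T']; first by rewrite /eq_ctx rev_rcons.
by move/eq_ctx_rcons=> [h1 h2]; exists G0', T'.
Qed.

Lemma eq_ctx_size G G' : eq_ctx G G' -> size G = size G'.
Proof.
rewrite /eq_ctx -(size_rev G) -(size_rev G').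
by elim: (rev G) (rev G') => [|x r IH] [|y r'] //= [/IH ->].
Qed.

Lemma eq_ctx_size_rcons G G' T T' :
  eq_ctx (rcons G T) (rcons G' T') -> size G = size G'.
Proof. by move/eq_ctx_size; rewrite !size_rcons => -[]. Qed.

Lemma eq_ctx_cat_size G G' D D' :
  eq_ctx (G ++ D) (G' ++ D') -> size G = size G' -> size D = size D'.
Proof. by move/eq_ctx_size; rewrite !size_cat => + e; rewrite e => /addnI. Qed.

End ContextEquality.

Section EqualityToCongruence.
Variables (M : Monad) (L : LModule M) (C : ctx L -> Prop) (Ct : jdg L -> Prop)
  (Ceq : ctx L -> ety L -> ety L -> Prop)
  (Cteq : ctx L -> ety L -> tm M -> tm M -> Prop).

Hypothesis C_prefix : forall G T, C (rcons G T) -> C G.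
Hypothesis Ct_bd : forall G R r, Ct (G, R, r) -> C (rcons G R).
Hypothesis Ct_wk : forall G T D R r, C (rcons G T) -> Ct (G ++ D, R, r) ->
  Ct (rcons G T ++ map (wkT (size G)) D, wkT (size G) R, wkt (size G) r).
Hypothesis Ct_sub : forall G S s D R r, Ct (G, S, s) -> Ct (rcons G S ++ D, R, r) ->
  Ct (G ++ map (subT s) D, subT s R, subt s r).
Hypothesis Ct_var : forall G T, C (rcons G T) ->
  Ct (rcons G T, wkT (size G) T, var M (size G)).

Hypothesis Ceq_C : forall G T T', Ceq G T T' -> C (rcons G T).
Hypothesis Ceq_refl : forall G T, C (rcons G T) -> Ceq G T T.
Hypothesis Ceq_sym : forall G T T', Ceq G T T' -> Ceq G T' T.
Hypothesis Ceq_trans : forall G T T' T'', Ceq G T T' -> Ceq G T' T'' -> Ceq G T T''.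
Hypothesis Cteq_Ct : forall G T o o', Cteq G T o o' -> Ct (G, T, o).
Hypothesis Cteq_refl : forall G T o, Ct (G, T, o) -> Cteq G T o o.
Hypothesis Cteq_sym : forall G T o o', Cteq G T o o' -> Cteq G T o' o.
Hypothesis Cteq_trans : forall G T o o' o'',
  Cteq G T o o' -> Cteq G T o' o'' -> Cteq G T o o''.
Hypothesis Ceq_conv : forall G1 T T' G2 S S', Ceq G1 T T' ->
  Ceq (rcons G1 T ++ G2) S S' -> Ceq (rcons G1 T' ++ G2) S S'.
Hypothesis Cteq_conv : forall G1 T T' G2 S o o', Ceq G1 T T' ->
  Cteq (rcons G1 T ++ G2) S o o' -> Cteq (rcons G1 T' ++ G2) S o o'.
Hypothesis Cteq_retype : forall G S S' o o',
  Ceq G S S' -> Cteq G S o o' -> Cteq G S' o o'.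
Hypothesis Ceq_wk : forall G1 T G2 S S', C (rcons G1 T) -> Ceq (G1 ++ G2) S S' ->
  Ceq (rcons G1 T ++ map (wkT (size G1)) G2) (wkT (size G1) S) (wkT (size G1) S').
Hypothesis Cteq_wk : forall G1 T G2 S o o', C (rcons G1 T) ->
  Cteq (G1 ++ G2) S o o' ->
  Cteq (rcons G1 T ++ map (wkT (size G1)) G2)
       (wkT (size G1) S) (wkt (size G1) o) (wkt (size G1) o').
Hypothesis Ceq_sub : forall G1 T G2 S S' r,
  Ceq (rcons G1 T ++ G2) S S' -> Ct (G1, T, r) ->
  Ceq (G1 ++ map (subT r) G2) (subT r S) (subT r S').
Hypothesis Cteq_sub : forall G1 T G2 S o o' r,
  Cteq (rcons G1 T ++ G2) S o o' -> Ct (G1, T, r) ->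
  Cteq (G1 ++ map (subT r) G2) (subT r S) (subt r o) (subt r o').
Hypothesis Ceq_sub_eq : forall G1 T G2 S r r',
  C (rcons (rcons G1 T ++ G2) S) -> Cteq G1 T r r' ->
  Ceq (G1 ++ map (subT r) G2) (subT r S) (subT r' S).
Hypothesis Cteq_sub_eq : forall G1 T G2 S o r r',
  Ct (rcons G1 T ++ G2, S, o) -> Cteq G1 T r r' ->
  Cteq (G1 ++ map (subT r) G2) (subT r S) (subt r o) (subt r' o).

Local Notation eqc := (eq_ctx Ceq).
Local Notation sim := (phi_sim C Ceq).
Local Notation simeq := (phi_simeq C Ct Ceq Cteq).

(* (4a) applied once per entry of the equal contexts. *)
Lemma eq_ctx_Ceq_cat G G' D S S' :
  eqc G G' -> Ceq (G ++ D) S S' -> Ceq (G' ++ D) S S'.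
Proof.
elim/last_ind: G G' D => [|G0 T IH] G' D; first by move/eq_ctx0l=> ->.
move=> /eq_ctx_rconsl [G0' [T' [-> [hG hT]]]].
rewrite !cat_rcons => h; apply: IH hG _.
by rewrite -cat_rcons; apply: Ceq_conv hT _; rewrite cat_rcons.
Qed.

Lemma eq_ctx_Cteq_cat G G' D S o o' :
  eqc G G' -> Cteq (G ++ D) S o o' -> Cteq (G' ++ D) S o o'.
Proof.
elim/last_ind: G G' D => [|G0 T IH] G' D; first by move/eq_ctx0l=> ->.
move=> /eq_ctx_rconsl [G0' [T' [-> [hG hT]]]].
rewrite !cat_rcons => h; apply: IH hG _.
by rewrite -cat_rcons; apply: Cteq_conv hT _; rewrite cat_rcons.
Qed.

Lemma eq_ctx_Ceq G G' S S' : eqc G G' -> Ceq G S S' -> Ceq G' S S'.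
Proof. by move=> h; have := @eq_ctx_Ceq_cat G G' [::] S S' h; rewrite !cats0. Qed.

Lemma eq_ctx_Cteq G G' S o o' : eqc G G' -> Cteq G S o o' -> Cteq G' S o o'.
Proof. by move=> h; have := @eq_ctx_Cteq_cat G G' [::] S o o' h; rewrite !cats0. Qed.

Lemma eq_ctx_Cteq_rcons G T G' T' o o' :
  eqc (rcons G T) (rcons G' T') -> Cteq G T o o' -> Cteq G' T' o o'.
Proof.
by move/eq_ctx_rcons=> [hG hT] h; apply: Cteq_retype (eq_ctx_Ceq hG hT) (eq_ctx_Cteq hG h).
Qed.

Lemma eq_ctx_refl G : C G -> eqc G G.
Proof.
elim/last_ind: G => [|G T IH] // hC.
by apply/eq_ctx_rcons; split; [apply: IH; apply: C_prefix hC | apply: Ceq_refl].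
Qed.

Lemma eq_ctx_sym G G' : eqc G G' -> eqc G' G.
Proof.
elim/last_ind: G G' => [|G0 T IH] G'; first by move/eq_ctx0l=> ->.
move=> /eq_ctx_rconsl [G0' [T' [-> [hG hT]]]].
by apply/eq_ctx_rcons; split; [apply: IH | apply: eq_ctx_Ceq hG (Ceq_sym hT)].
Qed.

Lemma eq_ctx_trans G G' G'' : eqc G G' -> eqc G' G'' -> eqc G G''.
Proof.
elim/last_ind: G G' G'' => [|G0 T IH] G' G''.
  by move/eq_ctx0l=> -> /eq_ctx0l ->.
move=> /eq_ctx_rconsl [G0' [T' [-> [hG hT]]]].
move=> /eq_ctx_rconsl [G0'' [T'' [-> [hG' hT']]]].
apply/eq_ctx_rcons; split; first exact: IH hG'.
by apply: Ceq_trans hT _; apply: eq_ctx_Ceq hT'; apply: eq_ctx_sym.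
Qed.

Lemma C_wk G T D :
  C (rcons G T) -> C (G ++ D) -> C (rcons G T ++ map (wkT (size G)) D).
Proof.
case/lastP: D => [|D X] hT; first by rewrite !cats0.
rewrite -rcons_cat map_rcons -rcons_cat => hD.
exact: Ceq_C (Ceq_wk hT (Ceq_refl hD)).
Qed.

Lemma C_sub G S s D :
  Ct (G, S, s) -> C (rcons G S ++ D) -> C (G ++ map (subT s) D).
Proof.
case/lastP: D => [|D X] hs; first by rewrite /= !cats0 => /C_prefix.
rewrite -rcons_cat map_rcons -rcons_cat => hD.
exact: Ceq_C (Ceq_sub (Ceq_refl hD) hs).
Qed.

Lemma eq_ctx_wk G T G' T' D D' : C (rcons G T) ->
  eqc (rcons G T) (rcons G' T') -> eqc (G ++ D) (G' ++ D') ->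
  eqc (rcons G T ++ map (wkT (size G)) D) (rcons G' T' ++ map (wkT (size G')) D').
Proof.
move=> hT hGT; have eqG := eq_ctx_size_rcons hGT.
rewrite -eqG; elim/last_ind: D D' => [|D X IH] D'.
  case/lastP: D' => [|D' X']; first by rewrite !cats0.
  by move=> /eq_ctx_cat_size /(_ eqG) /eqP; rewrite size_rcons.
case/lastP: D' => [|D' X'].
  by move=> /eq_ctx_cat_size /(_ eqG) /eqP; rewrite size_rcons.
rewrite -!rcons_cat => /eq_ctx_rcons [hD hX].
rewrite !map_rcons -!rcons_cat; apply/eq_ctx_rcons; split; first exact: IH.
exact: Ceq_wk hT hX.
Qed.

(* Entrywise, [Ceq_sub] substitutes [s] on both sides and [Ceq_sub_eq]
   then replaces [s] by [s'] on the right. *)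
Lemma eq_ctx_sub G S s G' S' s' D D' : Cteq G S s s' -> eqc G G' ->
  eqc (rcons G S ++ D) (rcons G' S' ++ D') ->
  eqc (G ++ map (subT s) D) (G' ++ map (subT s') D').
Proof.
move=> hs hG; have eqGS : size (rcons G S) = size (rcons G' S').
  by rewrite !size_rcons (eq_ctx_size hG).
elim/last_ind: D D' => [|D X IH] D'.
  case/lastP: D' => [|D' X']; first by rewrite !cats0.
  by move=> /eq_ctx_cat_size /(_ eqGS) /eqP; rewrite size_rcons.
case/lastP: D' => [|D' X'].
  by move=> /eq_ctx_cat_size /(_ eqGS) /eqP; rewrite size_rcons.
rewrite -!rcons_cat => /eq_ctx_rcons [hD hX].
rewrite !map_rcons -!rcons_cat; apply/eq_ctx_rcons; split; first exact: IH.
apply: Ceq_trans (Ceq_sub hX (Cteq_Ct hs)) _.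
exact: Ceq_sub_eq (Ceq_C (Ceq_sym hX)) hs.
Qed.

Lemma phi_sim_equiv : equiv_on C sim.
Proof.
split; first by move=> G G' [hG [hG' _]].
split; first by move=> G hG; split; [|split; last exact: eq_ctx_refl].
split; first by move=> G G' [hG [hG' h]]; split=> //; split=> //; exact: eq_ctx_sym.
move=> G G' G'' [hG [_ h]] [_ [hG'' h']].
by split=> //; split=> //; exact: eq_ctx_trans h h'.
Qed.

Lemma phi_simeq_equiv : equiv_on Ct simeq.
Proof.
split; first by move=> J J' [hJ [hJ' _]].
split.
  move=> [[G T] o] hJ; split=> //; split=> //; split; last exact: Cteq_refl.
  by have hT := Ct_bd hJ; split=> //; split=> //; exact: eq_ctx_refl.
split.
  move=> [[G T] o] [[G' T'] o'] [hJ [hJ' [[hT [hT' h]] ho]]].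
  split=> //; split=> //; split; first by split=> //; split=> //; exact: eq_ctx_sym.
  exact: eq_ctx_Cteq_rcons h (Cteq_sym ho).
move=> [[G T] o] [[G' T'] o'] [[G'' T''] o''].
move=> [hJ [_ [[hT [_ h]] ho]]] [_ [hJ'' [[_ [hT'' h']] ho']]].
split=> //; split=> //; split; first by split=> //; split=> //; exact: eq_ctx_trans h h'.
by apply: Cteq_trans ho _; apply: eq_ctx_Cteq_rcons (eq_ctx_sym h) ho'.
Qed.

Lemma phi_sim_size_ft G G' : sim G G' -> size G = size G' /\ sim (ft G) (ft G').
Proof.
move=> [hG [hG' h]]; split; first exact: eq_ctx_size h.
case/lastP: G hG h => [|G0 T] hG.
  by move/eq_ctx0l=> ->; split=> //; split.
move=> /eq_ctx_rconsl [G0' [T' [eG' [h _]]]]; subst G'.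
by rewrite !ft_rcons; split; [exact: C_prefix hG | split; [exact: C_prefix hG' |]].
Qed.

Lemma phi_sim_extend G T G' : C (rcons G T) -> sim G G' ->
  exists T', C (rcons G' T') /\ sim (rcons G T) (rcons G' T').
Proof.
move=> hT [_ [_ h]]; have hT' := eq_ctx_Ceq h (Ceq_refl hT).
exists T; split; first exact: Ceq_C hT'.
split=> //; split; first exact: Ceq_C hT'.
by apply/eq_ctx_rcons; split=> //; exact: Ceq_refl.
Qed.

Lemma phi_simeq_retype G T G' T' o : Ct (G, T, o) ->
  sim (rcons G T) (rcons G' T') -> simeq (G, T, o) (G', T', o).
Proof.
move=> hJ hGT; have [_ [_ h]] := hGT.
have hJ' := Cteq_Ct (eq_ctx_Cteq_rcons h (Cteq_refl hJ)).
by split=> //; split=> //; split=> //; exact: Cteq_refl.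
Qed.

Lemma phi_simeq_lift J F : Ct J -> sim (bd J) F ->
  exists J', Ct J' /\ bd J' = F /\ simeq J J'.
Proof.
case: J => [[G T] o] hJ hF; have [_ [_ /eq_ctx_rconsl]] := hF.
move=> [G' [T' [eF _]]]; subst F; have hJJ' := phi_simeq_retype hJ hF.
by exists (G', T', o); split=> //; case: hJJ' => _ [].
Qed.

Lemma phi_sim_wk G T D G' T' D' : sim (rcons G T) (rcons G' T') ->
  sim (G ++ D) (G' ++ D') ->
  sim (rcons G T ++ map (wkT (size G)) D) (rcons G' T' ++ map (wkT (size G')) D').
Proof.
move=> [hT [hT' h]] [hD [hD' h']].
by split; [exact: C_wk | split; [exact: C_wk | exact: eq_ctx_wk]].
Qed.

Lemma phi_simeq_wk G T D R r G' T' D' R' r' : sim (rcons G T) (rcons G' T') ->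
  simeq (G ++ D, R, r) (G' ++ D', R', r') ->
  simeq (rcons G T ++ map (wkT (size G)) D, wkT (size G) R, wkt (size G) r)
        (rcons G' T' ++ map (wkT (size G')) D', wkT (size G') R', wkt (size G') r').
Proof.
move=> hGT [hJ [hJ' [hb hr]]]; have [hT [hT' h]] := hGT.
have eqG := eq_ctx_size_rcons h.
split; first exact: Ct_wk.
split; first exact: Ct_wk.
split; last by rewrite /= -eqG; exact: Cteq_wk hT hr.
rewrite /bd /= in hb *; rewrite !rcons_cat -!map_rcons.
by apply: phi_sim_wk => //; rewrite -!rcons_cat.
Qed.

Lemma phi_sim_sub G S s D G' S' s' D' : simeq (G, S, s) (G', S', s') ->
  sim (rcons G S ++ D) (rcons G' S' ++ D') ->
  sim (G ++ map (subT s) D) (G' ++ map (subT s') D').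
Proof.
move=> [hs [hs' [[_ [_ /eq_ctx_rcons [hG _]]] hss']]] [hD [hD' h]].
by split; [exact: C_sub hD | split; [exact: C_sub hD' | exact: eq_ctx_sub h]].
Qed.

Lemma phi_simeq_sub G S s D R r G' S' s' D' R' r' :
  simeq (G, S, s) (G', S', s') ->
  simeq (rcons G S ++ D, R, r) (rcons G' S' ++ D', R', r') ->
  simeq (G ++ map (subT s) D, subT s R, subt s r)
        (G' ++ map (subT s') D', subT s' R', subt s' r').
Proof.
move=> hss' [hJ [hJ' [hb hr]]]; have [hs [hs' [_ hsc]]] := hss'.
split; first exact: Ct_sub hs hJ.
split; first exact: Ct_sub hs' hJ'.
split.
  by rewrite /bd /= in hb *; rewrite !rcons_cat -!map_rcons;
     apply: phi_sim_sub hss' _; rewrite -!rcons_cat.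
exact: Cteq_trans (Cteq_sub hr hs) (Cteq_sub_eq (Cteq_Ct (Cteq_sym hr)) hsc).
Qed.

Lemma phi_simeq_var G T G' T' : sim (rcons G T) (rcons G' T') ->
  simeq (rcons G T, wkT (size G) T, var M (size G))
        (rcons G' T', wkT (size G') T', var M (size G')).
Proof.
move=> [hT [hT' h]].
have eqG := eq_ctx_size_rcons h.
split; first exact: Ct_var.
split; first exact: Ct_var.
split; last by rewrite /= -eqG; apply: Cteq_refl; exact: Ct_var.
split; first exact: Ct_bd (Ct_var hT).
split; first exact: Ct_bd (Ct_var hT').
apply/eq_ctx_rcons; split=> //; rewrite -eqG.
by have := @Ceq_wk G T [::] T T' hT; rewrite !cats0; apply; case/eq_ctx_rcons: h.
Qed.

Lemma phi_regular_congruence : regular_congruence C Ct sim simeq.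
Proof.
split; first by split; [exact: phi_sim_equiv | exact: phi_simeq_equiv].
split; first exact: phi_sim_size_ft.
split; first by move=> J J' [_ [_ []]].
split; first by move=> G T G' hT _; exact: phi_sim_extend.
split; first by move=> J F hJ _; exact: phi_simeq_lift.
split; first exact: phi_sim_wk.
split; first exact: phi_simeq_wk.
split; first exact: phi_sim_sub.
split; first exact: phi_simeq_sub.
exact: phi_simeq_var.
Qed.

Lemma phi_sim_sigma G F : C G -> C F -> sim (ft G) F -> sim G (sigma G F).
Proof.
move=> hG hF [_ [_ h]]; case/lastP: G hG h => [|G T] hG.
  by move/eq_ctx0l=> ->; split=> //; split.
rewrite ft_rcons => h; rewrite sigma_rcons -?(eq_ctx_size h) //.
have hT := eq_ctx_Ceq h (Ceq_refl hG).
split=> //; split; first exact: Ceq_C hT.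
by apply/eq_ctx_rcons; split=> //; exact: Ceq_refl.
Qed.

Lemma phi_simeq_sigmat J F : Ct J -> sim (bd J) F -> simeq J (sigmat J F).
Proof.
case: J => [[G T] o] hJ hF; have [_ [_ /eq_ctx_rconsl]] := hF.
move=> [G' [T' [eF [h _]]]]; subst F.
by rewrite sigmat_rcons -?(eq_ctx_size h) //; exact: phi_simeq_retype.
Qed.

Lemma phi_target_conditions : target_conditions C Ct sim simeq.
Proof.
split; first exact: phi_sim_equiv.
split; first exact: phi_simeq_equiv.
split; first exact: phi_regular_congruence.
by split; [exact: phi_sim_sigma | move=> J F hJ _; exact: phi_simeq_sigmat].
Qed.

Lemma psi_phi_Ceq G T T' : psi_Ceq C sim G T T' <-> Ceq G T T'.
Proof.
split; first by move=> [_ [_ [_ [_ /eq_ctx_rcons []]]]].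
move=> h; have hT := Ceq_C h; have hT' := Ceq_C (Ceq_sym h).
do 4 (split=> //).
by apply/eq_ctx_rcons; split=> //; exact: eq_ctx_refl (C_prefix hT).
Qed.

Lemma psi_phi_Cteq G T o o' : psi_Cteq Ct simeq G T o o' <-> Cteq G T o o'.
Proof.
split; first by move=> [_ [_ [_ [_ []]]]].
move=> h; have hJ := Cteq_Ct h; have hJ' := Cteq_Ct (Cteq_sym h).
do 5 (split=> //); have hT := Ct_bd hJ.
by split=> //; split=> //; exact: eq_ctx_refl.
Qed.

End EqualityToCongruence.

Section CongruenceToEquality.
Variables (M : Monad) (L : LModule M) (C : ctx L -> Prop) (Ct : jdg L -> Prop)
  (sim : ctx L -> ctx L -> Prop) (simeq : jdg L -> jdg L -> Prop).

Hypothesis C_wf : forall G, C G -> wf_ctx G.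
Hypothesis Ct_wf : forall J, Ct J -> wf_jdg J.
Hypothesis C_prefix : forall G T, C (rcons G T) -> C G.
Hypothesis Ct_bd : forall G R r, Ct (G, R, r) -> C (rcons G R).

Hypothesis sim_equiv : equiv_on C sim.
Hypothesis simeq_equiv : equiv_on Ct simeq.
Hypothesis sim_size_ft : forall G G',
  sim G G' -> size G = size G' /\ sim (ft G) (ft G').
Hypothesis simeq_bd : forall J J', simeq J J' -> sim (bd J) (bd J').
Hypothesis sim_wk : forall G T D G' T' D',
  sim (rcons G T) (rcons G' T') -> sim (G ++ D) (G' ++ D') ->
  sim (rcons G T ++ map (wkT (size G)) D) (rcons G' T' ++ map (wkT (size G')) D').
Hypothesis simeq_wk : forall G T D R r G' T' D' R' r',
  sim (rcons G T) (rcons G' T') -> simeq (G ++ D, R, r) (G' ++ D', R', r') ->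
  simeq (rcons G T ++ map (wkT (size G)) D, wkT (size G) R, wkt (size G) r)
        (rcons G' T' ++ map (wkT (size G')) D', wkT (size G') R', wkt (size G') r').
Hypothesis sim_sub : forall G S s D G' S' s' D',
  simeq (G, S, s) (G', S', s') -> sim (rcons G S ++ D) (rcons G' S' ++ D') ->
  sim (G ++ map (subT s) D) (G' ++ map (subT s') D').
Hypothesis simeq_sub : forall G S s D R r G' S' s' D' R' r',
  simeq (G, S, s) (G', S', s') ->
  simeq (rcons G S ++ D, R, r) (rcons G' S' ++ D', R', r') ->
  simeq (G ++ map (subT s) D, subT s R, subt s r)
        (G' ++ map (subT s') D', subT s' R', subt s' r').
Hypothesis sim_sigma : forall G F, C G -> C F -> sim (ft G) F -> sim G (sigma G F).
Hypothesis simeq_sigmat : forall J F,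
  Ct J -> C F -> sim (bd J) F -> simeq J (sigmat J F).

Let sim_C : forall G G', sim G G' -> C G /\ C G' := proj1 sim_equiv.
Let sim_refl : forall G, C G -> sim G G := proj1 (proj2 sim_equiv).
Let sim_sym : forall G G', sim G G' -> sim G' G := proj1 (proj2 (proj2 sim_equiv)).
Let sim_trans : forall G G' G'', sim G G' -> sim G' G'' -> sim G G'' :=
  proj2 (proj2 (proj2 sim_equiv)).
Let simeq_Ct : forall J J', simeq J J' -> Ct J /\ Ct J' := proj1 simeq_equiv.
Let simeq_refl : forall J, Ct J -> simeq J J := proj1 (proj2 simeq_equiv).
Let simeq_sym : forall J J', simeq J J' -> simeq J' J :=
  proj1 (proj2 (proj2 simeq_equiv)).
Let simeq_trans : forall J J' J'', simeq J J' -> simeq J' J'' -> simeq J J'' :=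
  proj2 (proj2 (proj2 simeq_equiv)).

Local Notation Ceq := (psi_Ceq C sim).
Local Notation Cteq := (psi_Cteq Ct simeq).

Lemma sim_size_rcons G T G' T' : sim (rcons G T) (rcons G' T') -> size G = size G'.
Proof. by case/sim_size_ft; rewrite !size_rcons => -[]. Qed.

Lemma sim_rebase G G' T : C (rcons G T) -> sim G G' -> sim (rcons G T) (rcons G' T).
Proof.
move=> hT hG; have hft : sim (ft (rcons G T)) G' by rewrite ft_rcons.
have := sim_sigma hT (proj2 (sim_C hG)) hft.
by rewrite sigma_rcons // (proj1 (sim_size_ft hG)).
Qed.

Lemma sim_replace G T T' D : sim (rcons G T) (rcons G T') -> C (rcons G T ++ D) ->
  sim (rcons G T ++ D) (rcons G T' ++ D).
Proof.
elim/last_ind: D => [|D X IH] hT; first by rewrite !cats0.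
rewrite -!rcons_cat => hX; have hD := IH hT (C_prefix hX).
have hft : sim (ft (rcons (rcons G T ++ D) X)) (rcons G T' ++ D) by rewrite ft_rcons.
have := sim_sigma hX (proj2 (sim_C hD)) hft.
by rewrite sigma_rcons // !size_cat !size_rcons.
Qed.

Lemma sim_replace_rcons G T T' D S : sim (rcons G T) (rcons G T') ->
  C (rcons (rcons G T ++ D) S) ->
  sim (rcons (rcons G T ++ D) S) (rcons (rcons G T' ++ D) S).
Proof.
by move=> hT hS; rewrite !rcons_cat; apply: sim_replace hT _; rewrite -rcons_cat.
Qed.

Lemma simeq_retype G T G' T' o : Ct (G, T, o) -> sim (rcons G T) (rcons G' T') ->
  simeq (G, T, o) (G', T', o).
Proof.
move=> hJ hT; have := simeq_sigmat hJ (proj2 (sim_C hT)) hT.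
by rewrite sigmat_rcons // (sim_size_rcons hT).
Qed.

Lemma psi_Ceq_of_sim G T T' : sim (rcons G T) (rcons G T') -> Ceq G T T'.
Proof. by move=> h; have [hT hT'] := sim_C h. Qed.

Lemma psi_Cteq_of_simeq G T o o' : simeq (G, T, o) (G, T, o') -> Cteq G T o o'.
Proof. by move=> h; have [hJ hJ'] := simeq_Ct h. Qed.

Lemma psi_Ceq_conv G1 T T' G2 S S' : Ceq G1 T T' ->
  Ceq (rcons G1 T ++ G2) S S' -> Ceq (rcons G1 T' ++ G2) S S'.
Proof.
move=> [_ [_ hT]] [hS [hS' h]]; apply: psi_Ceq_of_sim.
exact: sim_trans (sim_sym (sim_replace_rcons hT hS))
                 (sim_trans h (sim_replace_rcons hT hS')).
Qed.

Lemma psi_Cteq_conv G1 T T' G2 S o o' : Ceq G1 T T' ->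
  Cteq (rcons G1 T ++ G2) S o o' -> Cteq (rcons G1 T' ++ G2) S o o'.
Proof.
move=> [_ [_ hT]] [hJ [hJ' h]]; have hS := sim_replace_rcons hT (Ct_bd hJ).
apply: psi_Cteq_of_simeq.
exact: simeq_trans (simeq_sym (simeq_retype hJ hS)) (simeq_trans h (simeq_retype hJ' hS)).
Qed.

Lemma psi_Cteq_retype G S S' o o' : Ceq G S S' -> Cteq G S o o' -> Cteq G S' o o'.
Proof.
move=> [_ [_ hS]] [hJ [hJ' h]]; apply: psi_Cteq_of_simeq.
exact: simeq_trans (simeq_sym (simeq_retype hJ hS)) (simeq_trans h (simeq_retype hJ' hS)).
Qed.

Lemma psi_Ceq_wk G1 T G2 S S' : C (rcons G1 T) -> Ceq (G1 ++ G2) S S' ->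
  Ceq (rcons G1 T ++ map (wkT (size G1)) G2) (wkT (size G1) S) (wkT (size G1) S').
Proof.
move=> hT [_ [_ h]]; apply: psi_Ceq_of_sim.
rewrite !rcons_cat -!map_rcons; apply: sim_wk (sim_refl hT) _.
by rewrite -!rcons_cat.
Qed.

Lemma psi_Cteq_wk G1 T G2 S o o' : C (rcons G1 T) -> Cteq (G1 ++ G2) S o o' ->
  Cteq (rcons G1 T ++ map (wkT (size G1)) G2)
       (wkT (size G1) S) (wkt (size G1) o) (wkt (size G1) o').
Proof.
by move=> hT [_ [_ h]]; apply: psi_Cteq_of_simeq; apply: simeq_wk (sim_refl hT) h.
Qed.

Lemma psi_Ceq_sub G1 T G2 S S' r : Ceq (rcons G1 T ++ G2) S S' -> Ct (G1, T, r) ->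
  Ceq (G1 ++ map (subT r) G2) (subT r S) (subT r S').
Proof.
move=> [_ [_ h]] hr; apply: psi_Ceq_of_sim.
rewrite !rcons_cat -!map_rcons; apply: sim_sub (simeq_refl hr) _.
by rewrite -!rcons_cat.
Qed.

Lemma psi_Cteq_sub G1 T G2 S o o' r : Cteq (rcons G1 T ++ G2) S o o' -> Ct (G1, T, r) ->
  Cteq (G1 ++ map (subT r) G2) (subT r S) (subt r o) (subt r o').
Proof.
by move=> [_ [_ h]] hr; apply: psi_Cteq_of_simeq; apply: simeq_sub (simeq_refl hr) h.
Qed.

(* Substituting [r] and [r'] gives [~]-related extended contexts whose
   prefixes are related by [size_ft]; (ii) then moves the right-hand type
   onto the left-hand prefix. *)
Lemma psi_Ceq_sub_eq G1 T G2 S r r' : C (rcons (rcons G1 T ++ G2) S) ->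
  Cteq G1 T r r' -> Ceq (G1 ++ map (subT r) G2) (subT r S) (subT r' S).
Proof.
move=> hS [_ [_ hr]]; apply: psi_Ceq_of_sim.
have : sim (rcons (G1 ++ map (subT r) G2) (subT r S))
           (rcons (G1 ++ map (subT r') G2) (subT r' S)).
  rewrite !rcons_cat -!map_rcons; apply: sim_sub hr _.
  by apply: sim_refl; rewrite -rcons_cat.
move=> h; have [_] := sim_size_ft h; rewrite !ft_rcons => hft.
exact: sim_trans h (sim_rebase (proj2 (sim_C h)) (sim_sym hft)).
Qed.

Lemma psi_Cteq_sub_eq G1 T G2 S o r r' : Ct (rcons G1 T ++ G2, S, o) ->
  Cteq G1 T r r' ->
  Cteq (G1 ++ map (subT r) G2) (subT r S) (subt r o) (subt r' o).
Proof.
move=> hJ [_ [_ hr]]; have h := simeq_sub hr (simeq_refl hJ).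
have hb := simeq_bd h; rewrite /bd /= in hb.
apply: psi_Cteq_of_simeq.
exact: simeq_trans h (simeq_retype (proj2 (simeq_Ct h)) (sim_sym hb)).
Qed.

Lemma psi_eq_conditions : eq_conditions C Ct Ceq Cteq.
Proof.
split.
  move=> G T T' [hT [hT' _]].
  have [hG eT] := wf_from_rcons (C_wf hT); have [_ eT'] := wf_from_rcons (C_wf hT').
  by split; [split|]; rewrite // ?eT ?eT'.
split; first by move=> G T o o' [/Ct_wf [hT eo] [/Ct_wf [_ eo'] _]].
split; first by move=> G T T' [].
split; first by move=> G T hT; split=> //; split=> //; exact: sim_refl.
split; first by move=> G T T' [hT [hT' h]]; split=> //; split=> //; exact: sim_sym.
split.
  move=> G T T' T'' [hT [_ h]] [_ [hT'' h']].
  by split=> //; split=> //; exact: sim_trans h h'.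
split; first by move=> G T o o' [].
split; first by move=> G T o hJ; split=> //; split=> //; exact: simeq_refl.
split; first by move=> G T o o' [hJ [hJ' h]]; split=> //; split=> //; exact: simeq_sym.
split.
  move=> G T o o' o'' [hJ [_ h]] [_ [hJ'' h']].
  by split=> //; split=> //; exact: simeq_trans h h'.
split; first exact: psi_Ceq_conv.
split; first exact: psi_Cteq_conv.
split; first exact: psi_Cteq_retype.
split; first exact: psi_Ceq_wk.
split; first exact: psi_Cteq_wk.
split; first exact: psi_Ceq_sub.
split; first exact: psi_Cteq_sub.
split; first exact: psi_Ceq_sub_eq.
exact: psi_Cteq_sub_eq.
Qed.

Lemma eq_ctx_psi_Ceq G G' : C G -> C G' -> eq_ctx Ceq G G' -> sim G G'.
Proof.
elim/last_ind: G G' => [|G T IH] G' hG hG'.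
  by move/eq_ctx0l=> eG'; subst G'; exact: sim_refl.
move=> /eq_ctx_rconsl [G0' [T' [eG' [h [_ [_ hT]]]]]]; subst G'.
have hGG' := IH _ (C_prefix hG) (C_prefix hG') h.
exact: sim_trans hT (sim_rebase (proj2 (sim_C hT)) hGG').
Qed.

Lemma sim_eq_ctx_psi_Ceq G G' : sim G G' -> eq_ctx Ceq G G'.
Proof.
elim/last_ind: G G' => [|G T IH] G'.
  by case/lastP: G' => [|G' T'] // /sim_size_ft [/esym]; rewrite size_rcons.
case/lastP: G' => [|G' T'] h; first by have [] := sim_size_ft h; rewrite size_rcons.
have [_] := sim_size_ft h; rewrite !ft_rcons => hG.
have hG'T' := sim_rebase (proj2 (sim_C h)) (sim_sym hG).
apply/eq_ctx_rcons; split; first exact: IH.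
exact: psi_Ceq_of_sim (sim_trans h hG'T').
Qed.

Lemma phi_psi_sim G G' : phi_sim C Ceq G G' <-> sim G G'.
Proof.
split; first by move=> [hG [hG' h]]; exact: eq_ctx_psi_Ceq.
move=> h; have [hG hG'] := sim_C h.
by split=> //; split=> //; exact: sim_eq_ctx_psi_Ceq.
Qed.

Lemma phi_psi_simeq J J' : phi_simeq C Ct Ceq Cteq J J' <-> simeq J J'.
Proof.
case: J J' => [[G T] o] [[G' T'] o']; split.
  move=> [hJ [hJ' [/phi_psi_sim hb [_ [_ h]]]]].
  exact: simeq_trans h (simeq_sym (simeq_retype hJ' (sim_sym hb))).
move=> h; have [hJ hJ'] := simeq_Ct h; have hb := simeq_bd h.
have h' := simeq_retype hJ' (sim_sym hb).
split=> //; split=> //; split; first exact/phi_psi_sim.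
exact: psi_Cteq_of_simeq (simeq_trans h h').
Qed.

End CongruenceToEquality.

Lemma eq_conditions_phi M (L : LModule M) (C : ctx L -> Prop) (Ct : jdg L -> Prop)
  (Ceq : ctx L -> ety L -> ety L -> Prop) (Cteq : ctx L -> ety L -> tm M -> tm M -> Prop) :
  Csubsystem C Ct -> eq_conditions C Ct Ceq Cteq ->
  target_conditions C Ct (phi_sim C Ceq) (phi_simeq C Ct Ceq Cteq) /\
  (forall G T T', psi_Ceq C (phi_sim C Ceq) G T T' <-> Ceq G T T') /\
  (forall G T o o', psi_Cteq Ct (phi_simeq C Ct Ceq Cteq) G T o o' <-> Cteq G T o o').
Proof.
move=> [_ [_ [_ [C_prefix [Ct_bd [Ct_wk [Ct_sub Ct_var]]]]]]].
move=> [_ [_ [Ceq_C [Ceq_refl [Ceq_sym [Ceq_trans [Cteq_Ct [Cteq_refl [Cteq_sym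
  [Cteq_trans [Ceq_conv [Cteq_conv [Cteq_retype [Ceq_wk [Cteq_wk [Ceq_sub
  [Cteq_sub [Ceq_sub_eq Cteq_sub_eq]]]]]]]]]]]]]]]]]].
by split; [apply: phi_target_conditions | split; [apply: psi_phi_Ceq | apply: psi_phi_Cteq]].
Qed.

Lemma target_conditions_psi M (L : LModule M) (C : ctx L -> Prop) (Ct : jdg L -> Prop)
  (sim : ctx L -> ctx L -> Prop) (simeq : jdg L -> jdg L -> Prop) :
  Csubsystem C Ct -> target_conditions C Ct sim simeq ->
  eq_conditions C Ct (psi_Ceq C sim) (psi_Cteq Ct simeq) /\
  (forall G G', phi_sim C (psi_Ceq C sim) G G' <-> sim G G') /\
  (forall J J', phi_simeq C Ct (psi_Ceq C sim) (psi_Cteq Ct simeq) J J' <-> simeq J J').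
Proof.
move=> [C_wf [Ct_wf [_ [C_prefix [Ct_bd _]]]]].
move=> [sim_equiv [simeq_equiv [[_ [sim_size_ft [simeq_bd [_ [_ [sim_wk [simeq_wk
  [sim_sub [simeq_sub _]]]]]]]]] [sim_sigma simeq_sigmat]]]].
by split; [apply: psi_eq_conditions | split; [apply: phi_psi_sim | apply: phi_psi_simeq]].
Qed.

Theorem proposition6p11 (M : Monad) (L : LModule M)
  (C : ctx L -> Prop) (Ct : jdg L -> Prop) :
  Csubsystem C Ct ->
  (forall (Ceq : ctx L -> ety L -> ety L -> Prop)
          (Cteq : ctx L -> ety L -> tm M -> tm M -> Prop),
      eq_conditions C Ct Ceq Cteq ->
      target_conditions C Ct (phi_sim C Ceq) (phi_simeq C Ct Ceq Cteq)) /\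
  (forall (sim : ctx L -> ctx L -> Prop) (simeq : jdg L -> jdg L -> Prop),
      target_conditions C Ct sim simeq ->
      eq_conditions C Ct (psi_Ceq C sim) (psi_Cteq Ct simeq)) /\
  (forall (Ceq : ctx L -> ety L -> ety L -> Prop)
          (Cteq : ctx L -> ety L -> tm M -> tm M -> Prop),
      eq_conditions C Ct Ceq Cteq ->
      (forall G T T', psi_Ceq C (phi_sim C Ceq) G T T' <-> Ceq G T T') /\
      (forall G T o o',
         psi_Cteq Ct (phi_simeq C Ct Ceq Cteq) G T o o' <-> Cteq G T o o')) /\
  (forall (sim : ctx L -> ctx L -> Prop) (simeq : jdg L -> jdg L -> Prop),
      target_conditions C Ct sim simeq ->
      (forall G G', phi_sim C (psi_Ceq C sim) G G' <-> sim G G') /\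
      (forall J J',
         phi_simeq C Ct (psi_Ceq C sim) (psi_Cteq Ct simeq) J J' <-> simeq J J')).
Proof.
move=> HC; split; [|split; [|split]].
- by move=> Ceq Cteq /(eq_conditions_phi HC) [].
- by move=> sim simeq /(target_conditions_psi HC) [].
- by move=> Ceq Cteq /(eq_conditions_phi HC) [].
- by move=> sim simeq /(target_conditions_psi HC) [].
Qed.
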